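(* Let $(X,\phi)$ be an acyclic convex geometry, let $A\subseteq X$ be a critical minimal generator of $b\in X$, and let $\Sigma$ be any unit implicational base of $(X,\phi)$. Then there exists an implication $C\to b\in\Sigma$ with $A\subseteq C$.
   Context: All sets are finite. A closure operator $\phi$ on $X$ is extensive, monotone and idempotent on $2^X$; closed sets are those with $\phi(C)=C$. $(X,\phi)$ is standard if $\phi(\emptyset)=\emptyset$ and $\phi(\{x\})\setminus\{x\}$ is closed for each $x$. A unit implicational base $\Sigma$ (set of implications $A\to b$, $A\subseteq X$, $b\in X$) is an implicational base of $(X,\phi)$ if its closed sets (sets $S$ such that for each $A\to b\in\Sigma$, $A\not\subseteq S$ or $b\in S$) are exactly the closed sets of $\phi$. $\Sigma$ is acyclic if the directed graph on $X$ with arcs $x\to y$ whenever some $A\to y\in\Sigma$ has $x\in A$ has no directed cycle; $\Sigma$ is irredundant if removing any implication changes the closed sets. An acyclic convex geometry is a standard closure space admitting an acyclic implicational base. $A$ is a minimal generator of $b$ if $b\in\phi(A)$ and $b\notin\phi(A\setminus\{x\})$ for all $x\in A$. An acyclic convex geometry admits a unique irredundant implicational base all of whose implications $A\to b$ have $A$ a minimal generator of $b$ (the critical base); a minimal generator $A$ of $b$ is critical if $A\to b$ is in the critical base. *)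

From mathcomp Require Import all_boot.
Set Implicit Arguments. Unset Strict Implicit. Unset Printing Implicit Defensive.

Section ClosureDefs.
Variable X : finType.

Definition closure_operator (phi : {set X} -> {set X}) : Prop :=
  [/\ (forall S : {set X}, S \subset phi S),
      (forall S T : {set X}, S \subset T -> phi S \subset phi T) &
      (forall S : {set X}, phi (phi S) = phi S)].

Definition phi_closed (phi : {set X} -> {set X}) (C : {set X}) : Prop := phi C = C.

Definition standard (phi : {set X} -> {set X}) : Prop :=
  phi set0 = set0 /\ forall x : X, phi_closed phi (phi [set x] :\ x).

Definition implication := ({set X} * X)%type.

Definition sigma_closed (Sigma : {set implication}) (S : {set X}) : Prop :=
  forall (A : {set X}) (b : X), (A, b) \in Sigma -> ~~ (A \subset S) \/ b \in S.

Definition implicational_base (phi : {set X} -> {set X}) (Sigma : {set implication}) : Prop :=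
  forall S : {set X}, sigma_closed Sigma S <-> phi_closed phi S.

Definition dep_graph (Sigma : {set implication}) : rel X :=
  fun x y => [exists A : {set X}, ((A, y) \in Sigma) && (x \in A)].

Definition acyclic (Sigma : {set implication}) : Prop :=
  forall c : seq X, c != [::] -> ~~ cycle (dep_graph Sigma) c.

Definition irredundant (Sigma : {set implication}) : Prop :=
  forall i : implication, i \in Sigma ->
    ~ (forall S : {set X}, sigma_closed (Sigma :\ i) S <-> sigma_closed Sigma S).

Definition acyclic_convex_geometry (phi : {set X} -> {set X}) : Prop :=
  [/\ closure_operator phi, standard phi &
      exists Sigma : {set implication}, implicational_base phi Sigma /\ acyclic Sigma].

Definition minimal_generator (phi : {set X} -> {set X}) (A : {set X}) (b : X) : Prop :=
  b \in phi A /\ forall x : X, x \in A -> b \notin phi (A :\ x).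

(* the critical base: the (unique, for acyclic convex geometries) irredundant
   implicational base all of whose premises are minimal generators *)
Definition critical_base (phi : {set X} -> {set X}) (Sigma : {set implication}) : Prop :=
  [/\ implicational_base phi Sigma, irredundant Sigma &
      forall (A : {set X}) (b : X), (A, b) \in Sigma -> minimal_generator phi A b].

Definition critical_generator (phi : {set X} -> {set X}) (A : {set X}) (b : X) : Prop :=
  minimal_generator phi A b /\
  forall Sigma : {set implication}, critical_base phi Sigma -> (A, b) \in Sigma.

End ClosureDefs.

From mathcomp Require Import all_boot.

(* Shrinking every premise C -> c of Sigma to a minimal generator of c inside C
   yields again an implicational base, since closure is monotone.  An
   inclusion-minimal sub-base of it is irredundant and has only minimal
   generators as premises, i.e. it is a critical base; hence it contains
   A -> b, and A was obtained by shrinking the premise of some C -> b in Sigma. *)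

Set Implicit Arguments.
Unset Strict Implicit.
Unset Printing Implicit Defensive.

Section CriticalGenerators.
Variables (X : finType) (phi : {set X} -> {set X}).

Definition sigma_closedb (Sigma : {set implication X}) (S : {set X}) : bool :=
  [forall A : {set X}, forall b : X,
     ((A, b) \in Sigma) ==> ~~ (A \subset S) || (b \in S)].

Lemma sigma_closedP Sigma S : reflect (sigma_closed Sigma S) (sigma_closedb Sigma S).
Proof.
apply: (iffP forallP) => [H A b Hab | H A].
  by have /forallP/(_ b)/implyP/(_ Hab)/orP := H A.
by apply/forallP => b; apply/implyP => /H/orP.
Qed.

Definition implicational_baseb (Sigma : {set implication X}) : bool :=
  [forall S : {set X}, sigma_closedb Sigma S == (phi S == S)].

Lemma implicational_baseP Sigma :
  reflect (implicational_base phi Sigma) (implicational_baseb Sigma).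
Proof.
apply: (iffP forallP) => H S.
  have /eqP HS := H S.
  split=> [/sigma_closedP | /eqP]; first by rewrite HS => /eqP.
  by rewrite -HS => /sigma_closedP.
apply/eqP; apply/idP/idP => [/sigma_closedP/H -> // | /eqP/H/sigma_closedP //].
Qed.

Definition minimal_generatorb (A : {set X}) (b : X) : bool :=
  (b \in phi A) && [forall x in A, b \notin phi (A :\ x)].

Lemma minimal_generatorP A b :
  reflect (minimal_generator phi A b) (minimal_generatorb A b).
Proof.
by apply: (iffP andP) => -[Hb H]; split=> //; [move=> x /(forall_inP H) | apply/forall_inP].
Qed.

Lemma minimal_generator_exists (C : {set X}) (c : X) :
  c \in phi C -> exists2 A : {set X}, A \subset C & minimal_generator phi A c.
Proof.
move=> cC.
have [|A minA _] := @minset_exists _ (fun A : {set X} => (A \subset C) && (c \in phi A)) C.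
  by rewrite subxx cC.
have /andP[AC cA] := minsetp minA.
exists A => //; split=> // x xA; apply/negP => cAx.
have AxA : A :\ x = A.
  by apply: (minsetinf minA); rewrite ?subD1set // cAx andbT (subset_trans _ AC) ?subD1set.
by move/setP/(_ x): AxA; rewrite !inE eqxx xA.
Qed.

Lemma critical_subbase_exists (Sigma : {set implication X}) :
  implicational_base phi Sigma ->
  (forall A b, (A, b) \in Sigma -> minimal_generator phi A b) ->
  exists2 Sigma' : {set implication X}, Sigma' \subset Sigma & critical_base phi Sigma'.
Proof.
move=> base mingen.
have [|Sigma' minS _] :=
  @minset_exists _ (fun S : {set implication X} => (S \subset Sigma) && implicational_baseb S) Sigma.
  by rewrite subxx; apply/implicational_baseP.
have /andP[subS /implicational_baseP base'] := minsetp minS.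
exists Sigma' => //; split=> // [i iS same | A b /(subsetP subS)/mingen //].
have SiS : Sigma' :\ i = Sigma'.
  apply: (minsetinf minS); last exact: subD1set.
  rewrite (subset_trans _ subS) ?subD1set //=.
  by apply/implicational_baseP => S; split=> [/same/base' | /base'/same].
by move/setP/(_ i): SiS; rewrite !inE eqxx iS.
Qed.

Definition minimal_refinement (Sigma : {set implication X}) : {set implication X} :=
  [set i | minimal_generatorb i.1 i.2 &&
           [exists C, ((C, i.2) \in Sigma) && (i.1 \subset C)]].

Lemma mem_minimal_refinement Sigma A b :
  ((A, b) \in minimal_refinement Sigma) =
  minimal_generatorb A b && [exists C, ((C, b) \in Sigma) && (A \subset C)].
Proof. by rewrite inE. Qed.

Lemma minimal_refinement_mingen Sigma A b :
  (A, b) \in minimal_refinement Sigma -> minimal_generator phi A b.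
Proof. by rewrite mem_minimal_refinement => /andP[/minimal_generatorP]. Qed.

Hypotheses (phi_ext : forall S : {set X}, S \subset phi S)
  (phi_mono : forall S T : {set X}, S \subset T -> phi S \subset phi T)
  (phi_idem : forall S : {set X}, phi (phi S) = phi S).

Lemma implicational_base_sound Sigma C c :
  implicational_base phi Sigma -> (C, c) \in Sigma -> c \in phi C.
Proof.
move=> base Cc.
have /base closed_phiC : phi_closed phi (phi C) by exact: phi_idem.
by case: (closed_phiC C c Cc); rewrite ?phi_ext.
Qed.

Lemma minimal_refinement_base Sigma :
  implicational_base phi Sigma -> implicational_base phi (minimal_refinement Sigma).
Proof.
move=> base S; split=> [closed1 | closedS A b].
  apply/base => C c Cc; case: (boolP (C \subset S)) => [CS | ]; last by left.
  have [A AC mingen] := minimal_generator_exists (implicational_base_sound base Cc).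
  have Ac : (A, c) \in minimal_refinement Sigma.
    by rewrite mem_minimal_refinement; apply/andP; split;
      [apply/minimal_generatorP | apply/existsP; exists C; rewrite Cc].
  by case: (closed1 _ _ Ac) => [/negP[]|]; [apply: subset_trans CS | right].
rewrite mem_minimal_refinement => /andP[/andP[bA _] _].
case: (boolP (A \subset S)) => AS; [right | by left].
by rewrite -closedS; apply: subsetP (phi_mono AS) _ bA.
Qed.

End CriticalGenerators.

Theorem proposition4 (X : finType) (phi : {set X} -> {set X})
  (A : {set X}) (b : X) (Sigma : {set implication X}) :
  acyclic_convex_geometry phi ->
  critical_generator phi A b ->
  implicational_base phi Sigma ->
  exists C : {set X}, (C, b) \in Sigma /\ A \subset C.
Proof.
case=> [[ext mono idem] _ _] [_ crit] base.
have base1 := minimal_refinement_base ext mono idem base.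
have [Sigma' sub' crit'] :=
  critical_subbase_exists base1 (@minimal_refinement_mingen _ phi Sigma).
have := subsetP sub' _ (crit _ crit').
by rewrite mem_minimal_refinement => /andP[_ /existsP[C /andP[Cb AC]]]; exists C.
Qed.
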